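(* There do not exist a mapping $\hat c$ from the set of $3$-element multisets of elements of $[3]=\{1,2,3\}$ to $[3]$ and a function $m'$ from positive integers to positive integers such that the following holds for every positive integer $m$: for every hypergraph $G=(V,E)$ and every $3$-coloring $c:\binom{V}{2}\to[3]$ of the pairs of vertices of $G$ such that every hyperedge containing at least $m$ vertices contains pairs of all three colors, the coloring $c':\binom{V}{3}\to[3]$ defined by $c'(\{x,y,z\})=\hat c(\{c(\{x,y\}),c(\{x,z\}),c(\{y,z\})\})$ (multiset) has the property that every hyperedge containing at least $m'(m)$ vertices contains triples of all three colors.
   Context: $\binom{V}{j}$ denotes the set of $j$-element subsets of $V$. A hyperedge contains a pair/triple if it is a subset of the hyperedge. *)

From mathcomp Require Import all_boot.
Set Implicit Arguments. Unset Strict Implicit. Unset Printing Implicit Defensive.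

(* A map from 3-element multisets of [3] = 'I_3 to [3] is encoded as a
   function of three arguments invariant under all permutations of them. *)
Definition multiset_map3 (chat : 'I_3 -> 'I_3 -> 'I_3 -> 'I_3) : Prop :=
  forall a b d, chat a b d = chat b a d /\ chat a b d = chat a d b.

(* Pair colouring c : binom(V,2) -> [3]: only its values on 2-element sets
   [set x; y] (x != y) matter. *)

Definition all_pair_colors (T : finType) (c : {set T} -> 'I_3) (e : {set T}) : Prop :=
  forall k : 'I_3, exists x y, [/\ x \in e, y \in e, x != y & c [set x; y] = k].

Definition induced3 (T : finType) (chat : 'I_3 -> 'I_3 -> 'I_3 -> 'I_3)
  (c : {set T} -> 'I_3) (x y z : T) : 'I_3 :=
  chat (c [set x; y]) (c [set x; z]) (c [set y; z]).

Definition all_triple_colors (T : finType) (chat : 'I_3 -> 'I_3 -> 'I_3 -> 'I_3)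
  (c : {set T} -> 'I_3) (e : {set T}) : Prop :=
  forall k : 'I_3, exists x y z,
    [/\ x \in e, y \in e, z \in e, [&& x != y, x != z & y != z] & induced3 chat c x y z = k].

From mathcomp Require Import all_boot zify.

(* Take m = 1 and a single hyperedge on all n >= m'(1) + 4 vertices: then every
   pair colouring of K_n using all three colours must induce a triple colouring
   using all three colours.  Colouring everything a except for a b-coloured star
   at one vertex, one edge of which is recoloured c, only produces the triple
   types aaa, abb, abc; colouring everything b except for two disjoint edges
   coloured a and c only produces bbb, abb, bbc.  So the values of chat on each
   of these three multisets are pairwise distinct.  Comparing the star
   colourings for (a, b, c) and (c, b, a) with the second colouring shows that
   chat(aaa) and chat(ccc) differ, so the three monochromatic values exhaust
   [3]; yet none of them equals chat(abc). *)

Set Implicit Arguments.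
Unset Strict Implicit.
Unset Printing Implicit Defensive.

Lemma ord3_uniq_size (s : seq 'I_3) : uniq s -> size s <= 3.
Proof.
move=> uniq_s; have := uniq_leq_size uniq_s (fun k _ => mem_enum 'I_3 k).
by rewrite size_enum_ord.
Qed.

Lemma ord3_uniq_mem (a b c : 'I_3) : uniq [:: a; b; c] -> forall k, k \in [:: a; b; c].
Proof.
move=> abc k; have [|_ ->] := uniq_min_size abc (fun k _ => mem_enum 'I_3 k).
  by rewrite size_enum_ord.
by rewrite mem_enum.
Qed.

Lemma ord3_cover_uniq (a b c : 'I_3) :
  (forall k : 'I_3, k \in [:: a; b; c]) -> uniq [:: a; b; c].
Proof.
move=> cover; apply: (@leq_size_uniq _ (enum 'I_3)); first exact: enum_uniq.
  by move=> k _; apply: cover.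
by rewrite size_enum_ord.
Qed.

Lemma ord3_uniq_third (p q r s : 'I_3) :
  uniq [:: p; r; q] -> uniq [:: p; s; q] -> r = s.
Proof.
move=> prq psq; apply/eqP; apply: contraT => rs.
have /ord3_uniq_size : uniq [:: p; r; s; q].
  move: prq psq; rewrite /= !inE !negb_or.
  by case/and3P=> /andP[-> ->] -> _ /and3P[/andP[-> _] -> _]; rewrite rs.
by [].
Qed.

Lemma ord_triple_wlog n (P : 'I_n -> 'I_n -> 'I_n -> Prop) :
    (forall x y z, P x y z -> P y x z) -> (forall x y z, P x y z -> P x z y) ->
    (forall x y z : 'I_n, x < y < z -> P x y z) ->
  forall x y z, [&& x != y, x != z & y != z] -> P x y z.
Proof.
move=> P12 P23 sorted.
have sorted_head (x y z : 'I_n) : x < y -> x != z -> y != z -> P x y z.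
  move=> xy xz yz.
  case: (ltngtP y z) => [lt_yz | lt_zy | eq_yz].
  - by apply: sorted; rewrite xy lt_yz.
  - apply: P23; case: (ltngtP x z) => [lt_xz | lt_zx | eq_xz].
    + by apply: sorted; rewrite lt_xz lt_zy.
    + by apply: P12; apply: sorted; rewrite lt_zx xy.
    + by rewrite (ord_inj eq_xz) eqxx in xz.
  - by rewrite (ord_inj eq_yz) eqxx in yz.
move=> x y z /and3P[xy xz yz]; case: (ltngtP x y) => [lt_xy | lt_yx | eq_xy].
- exact: sorted_head.
- by apply: P12; apply: sorted_head.
- by rewrite (ord_inj eq_xy) eqxx in xy.
Qed.

Section SymmetricTripleMap.

Variable chat : 'I_3 -> 'I_3 -> 'I_3 -> 'I_3.
Hypothesis chat_sym : multiset_map3 chat.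

Lemma chat_swap12 u v w : chat u v w = chat v u w.
Proof. by case: (chat_sym u v w). Qed.

Lemma chat_swap23 u v w : chat u v w = chat u w v.
Proof. by case: (chat_sym u v w). Qed.

Lemma chat_rev u v w : chat u v w = chat w v u.
Proof. by rewrite chat_swap12 chat_swap23 chat_swap12. Qed.

Lemma induced3_swap12 (V : finType) (c : {set V} -> 'I_3) x y z :
  induced3 chat c y x z = induced3 chat c x y z.
Proof. by rewrite /induced3 [[set y; x]]setUC chat_swap23. Qed.

Lemma induced3_swap23 (V : finType) (c : {set V} -> 'I_3) x y z :
  induced3 chat c x z y = induced3 chat c x y z.
Proof. by rewrite /induced3 [[set z; y]]setUC chat_swap12. Qed.

Lemma induced3_sorted_mem n (c : {set 'I_n} -> 'I_3) (S : seq 'I_3) :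
    (forall x y z : 'I_n, x < y < z -> induced3 chat c x y z \in S) ->
  forall x y z, [&& x != y, x != z & y != z] -> induced3 chat c x y z \in S.
Proof.
apply: ord_triple_wlog => x y z; first by rewrite induced3_swap12.
by rewrite induced3_swap23.
Qed.

End SymmetricTripleMap.

Definition rainbow_preserving chat (V : finType) : Prop :=
  forall c : {set V} -> 'I_3, all_pair_colors c [set: V] -> all_triple_colors chat c [set: V].

Lemma rainbow_preserving_uniq chat (V : finType) (c : {set V} -> 'I_3) (u v w : 'I_3) :
    rainbow_preserving chat V -> all_pair_colors c [set: V] ->
    (forall x y z, [&& x != y, x != z & y != z] -> induced3 chat c x y z \in [:: u; v; w]) ->
  uniq [:: u; v; w].
Proof.
move=> preserving /preserving rainbow induced_mem; apply: ord3_cover_uniq => k.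
by have [x [y [z [_ _ _ /induced_mem + <-]]]] := rainbow k.
Qed.

Definition star_coloring n (a b c : 'I_3) (S : {set 'I_n.+3}) : 'I_3 :=
  if ord0 \in S then (if inord 1 \in S then c else b) else a.

Lemma star_coloring_pairs n (a b c : 'I_3) :
  uniq [:: a; b; c] -> all_pair_colors (star_coloring a b c) [set: 'I_n.+3].
Proof.
move=> abc k; have := ord3_uniq_mem abc k; rewrite !inE => /or3P[] /eqP ->.
- exists (inord 1), (inord 2).
  by rewrite !inE /star_coloring !in_set2 -!val_eqE /= !inordK.
- exists ord0, (inord 2).
  by rewrite !inE /star_coloring !in_set2 -!val_eqE /= !inordK.
- exists ord0, (inord 1).
  by rewrite !inE /star_coloring !in_set2 -!val_eqE /= !inordK.
Qed.

Lemma star_coloring_triples chat n (a b c : 'I_3) : multiset_map3 chat ->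
  forall x y z : 'I_n.+3, [&& x != y, x != z & y != z] ->
  induced3 chat (star_coloring a b c) x y z \in [:: chat a a a; chat b b a; chat c b a].
Proof.
move=> chat_sym; apply: induced3_sorted_mem => // x y z /andP[xy yz].
rewrite /induced3 /star_coloring !in_set2 -!val_eqE /= !inordK //.
by repeat case: ifP => ?; rewrite ?inE ?eqxx ?orbT //; lia.
Qed.

(* The second edge is the top pair {n+2, n+3}: in an increasing triple each of
   the two special edges then occupies a fixed position. *)
Definition matching_coloring n (a b c : 'I_3) (S : {set 'I_n.+4}) : 'I_3 :=
  if (ord0 \in S) && (inord 1 \in S) then a
  else if (inord n.+2 \in S) && (ord_max \in S) then c else b.

Lemma matching_coloring_pairs n (a b c : 'I_3) :
  uniq [:: a; b; c] -> all_pair_colors (matching_coloring a b c) [set: 'I_n.+4].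
Proof.
move=> abc k; have := ord3_uniq_mem abc k; rewrite !inE => /or3P[] /eqP ->.
- exists ord0, (inord 1).
  by rewrite !inE /matching_coloring !in_set2 -!val_eqE /= !inordK.
- exists ord0, ord_max.
  rewrite !inE /matching_coloring !in_set2 -!val_eqE /= !inordK //.
  by rewrite (ltn_eqF (ltnSn n.+2)).
- exists (inord n.+2), ord_max.
  rewrite !inE /matching_coloring !in_set2 -!val_eqE /= !inordK //.
  by rewrite (ltn_eqF (ltnSn n.+2)) !eqxx ?orbT.
Qed.

Lemma matching_coloring_triples chat n (a b c : 'I_3) : multiset_map3 chat ->
  forall x y z : 'I_n.+4, [&& x != y, x != z & y != z] ->
  induced3 chat (matching_coloring a b c) x y z \in [:: chat b b b; chat a b b; chat b b c].
Proof.
move=> chat_sym; apply: induced3_sorted_mem => // x y z /andP[xy yz].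
have lt_z := ltn_ord z.
rewrite /induced3 /matching_coloring !in_set2 -!val_eqE /= !inordK //.
by repeat case: ifP => ?; rewrite ?inE ?eqxx ?orbT //; lia.
Qed.

Lemma star_coloring_uniq chat n (a b c : 'I_3) :
    multiset_map3 chat -> rainbow_preserving chat 'I_n.+3 -> uniq [:: a; b; c] ->
  uniq [:: chat a a a; chat b b a; chat c b a].
Proof.
move=> chat_sym preserving abc.
apply: (rainbow_preserving_uniq preserving (star_coloring_pairs n abc)).
exact: star_coloring_triples.
Qed.

Lemma matching_coloring_uniq chat n (a b c : 'I_3) :
    multiset_map3 chat -> rainbow_preserving chat 'I_n.+4 -> uniq [:: a; b; c] ->
  uniq [:: chat b b b; chat a b b; chat b b c].
Proof.
move=> chat_sym preserving abc.
apply: (rainbow_preserving_uniq preserving (matching_coloring_pairs n abc)).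
exact: matching_coloring_triples.
Qed.

Lemma multiset_map3_not_rainbow_preserving chat n :
  multiset_map3 chat -> ~ rainbow_preserving chat 'I_n.+4.
Proof.
move=> chat_sym preserving.
have star a b c : uniq [:: a; b; c] -> uniq [:: chat a a a; chat b b a; chat c b a].
  exact: star_coloring_uniq chat_sym preserving.
have matching_neq a b c : uniq [:: a; b; c] -> chat b b a != chat b b c.
  move/(matching_coloring_uniq chat_sym preserving).
  by rewrite (chat_rev chat_sym a) /= !inE => /and3P[_ -> _].
have mono_neq a b c : uniq [:: a; b; c] -> chat a a a != chat c c c.
  move=> abc; apply/eqP => mono_ac; move/negP: (matching_neq a b c abc); apply; apply/eqP.
  apply: (@ord3_uniq_third (chat a a a) (chat c b a)); first exact: star.
  have cba : uniq [:: c; b; a] by rewrite -rev_uniq.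
  by rewrite mono_ac -(chat_rev chat_sym a b c); apply: star.
have mono_neq_rainbow a b c : uniq [:: a; b; c] -> chat a a a != chat c b a.
  by move/star; rewrite /= !inE negb_or => /andP[/andP[_ ->]].
pose o0 := @Ordinal 3 0 isT; pose o1 := @Ordinal 3 1 isT; pose o2 := @Ordinal 3 2 isT.
suff /ord3_uniq_size : uniq [:: chat o0 o0 o0; chat o1 o1 o1; chat o2 o2 o2; chat o2 o1 o0] by [].
have mono0_rainbow := mono_neq_rainbow o0 o1 o2 isT.
have mono1_rainbow : chat o1 o1 o1 != chat o2 o1 o0.
  by rewrite (chat_swap23 chat_sym o2); apply: mono_neq_rainbow.
have mono2_rainbow : chat o2 o2 o2 != chat o2 o1 o0.
  by rewrite (chat_rev chat_sym o2 o1 o0); apply: mono_neq_rainbow.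
rewrite /= !inE !negb_or (mono_neq o0 o2 o1) ?(mono_neq o0 o1 o2) ?(mono_neq o1 o0 o2) //.
by rewrite mono0_rainbow mono1_rainbow mono2_rainbow.
Qed.

Theorem proposition5 :
  ~ exists (chat : 'I_3 -> 'I_3 -> 'I_3 -> 'I_3) (m' : nat -> nat),
      [/\ multiset_map3 chat,
          (forall n, 0 < n -> 0 < m' n) &
          forall m, 0 < m ->
          forall (V : finType) (E : {set {set V}}) (c : {set V} -> 'I_3),
            (forall e, e \in E -> m <= #|e| -> all_pair_colors c e) ->
            forall e, e \in E -> m' m <= #|e| -> all_triple_colors chat c e].
Proof.
move=> [chat [m' [chat_sym _ transfer]]].
apply: (@multiset_map3_not_rainbow_preserving chat (m' 1) chat_sym) => c rainbow.
apply: (transfer 1 isT _ [set setT]) => [e /set1P -> _ //||]; first by rewrite inE.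
by rewrite cardsT card_ord; lia.
Qed.
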